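(* Let $v$, $V$ be as in the context, $f=v-V$, and assume $(H1')_\delta$ with $0<\delta<1/(2p)$. Then there is a constant $\overline{c}_p>0$ depending only on $p$ such that for all $t\ge t_0$ $$\frac{p+1}{2(1+\overline c_p\delta)^2}\,\mathsf{E}[f(t)]\le\mathcal{E}[v(t)]\le\frac{p+1}{2}(1+\overline c_p\delta)^2\,\mathsf{E}[f(t)].$$
   Context: Let $N\ge1$, let $\Omega\subset\mathbb{R}^N$ be a bounded domain with $C^{2,\alpha}$ boundary, $m\in(\frac{(N-2)_+}{N+2},1)$, $p=1/m$. Let $u\ge0$ solve $u_\tau=\Delta u^m$ in $(0,\infty)\times\Omega$, $u=0$ on $\partial\Omega$, $u(0)=u_0$ with $0\le u_0\in L^q(\Omega)$, $q\ge1$, $q>N(1-m)/2$ if $m<(N-2)/N$; $T>0$ its extinction time, $\mathsf{c}=\frac{1}{(1-m)T}$, $w(t,x)=e^{\mathsf{c}t}u(T-Te^{-t/T},x)$, $v=w^m$ (so $\partial_tv^p=\Delta v+\mathsf{c}v^p$, $v=0$ on $\partial\Omega$). $S$ is the positive classical solution of $-\Delta S^m=\mathsf{c}S$, $S=0$ on $\partial\Omega$, with $w(t)\to S$ uniformly; $V=S^m$. $(H1')_\delta$: there is $t_0$ with $|v-V|\le\delta V$ a.e. on $[t_0,\infty)\times\Omega$. $\mathsf{E}[f]=\int_\Omega f^2V^{p-1}dx$ and $\mathcal{E}[v]=\int_\Omega[(v^{p+1}-V^{p+1})-\frac{p+1}{p}(v^p-V^p)V]dx$. *)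

From HB Require Import structures.
From mathcomp Require Import all_boot all_order all_algebra.
From mathcomp Require Import all_classical all_reals all_analysis.
Set Implicit Arguments. Unset Strict Implicit. Unset Printing Implicit Defensive.
Import Order.TTheory GRing.Theory Num.Theory.
Import numFieldNormedType.Exports.
Local Open Scope classical_set_scope.
Local Open Scope ring_scope.

Definition Enorm {R : realType} {d : measure_display} {T : measurableType d}
  (mu : {measure set T -> \bar R}) (Omega : set T) (p : R) (V f : T -> R) : \bar R :=
  (\int[mu]_(x in Omega) ((f x) ^+ 2 * (V x) `^ (p - 1))%:E)%E.

Definition Ecal {R : realType} {d : measure_display} {T : measurableType d}
  (mu : {measure set T -> \bar R}) (Omega : set T) (p : R) (V v : T -> R) : \bar R :=
  (\int[mu]_(x in Omega)
     (((v x) `^ (p + 1) - (V x) `^ (p + 1))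
      - (p + 1) / p * ((v x) `^ p - (V x) `^ p) * V x)%:E)%E.

(* Write [v = a V].  The integrands of [Ecal] and [Enorm] are [V^(p+1) h(a)] and
   [V^(p+1) (a - 1)^2], where [h(a) = a^(p+1) - 1 - (p+1)/p (a^p - 1)].  Since
   [h(1) = 0] and [h'(c) = (p+1) c^(p-1) (c - 1)], a mean-value argument traps
   [h(a)] between [(p+1)/2 (a-1)^2] times the extreme values of [c^(p-1)] for [c]
   between [1] and [a].  Hypothesis (H1') puts [a] in [[1-δ, 1+δ]], where
   [c^(p-1) = exp((p-1) ln c)] lies within the factors [(1 + 2pδ)^(±2)], so
   [cbar = 2p].  The pointwise sandwich holds a.e., hence integrates. *)

From HB Require Import structures.
From mathcomp Require Import all_boot all_order all_algebra.
From mathcomp Require Import all_classical all_reals all_analysis.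
From mathcomp Require Import ring lra.
From mathcomp Require Import measurable_realfun.
Import Order.TTheory GRing.Theory Num.Theory.
Import numFieldNormedType.Exports.
Local Open Scope classical_set_scope.
Local Open Scope ring_scope.

Section Taylor.
Context {R : realType}.
Implicit Types (f g w psi : R -> R) (lo hi z a m M : R).

Lemma deriv_factor_min {g w lo hi z a} :
  lo <= z <= hi -> lo <= a <= hi ->
  (forall c, lo <= c <= hi -> is_derive c 1 g ((c - z) * w c)) ->
  (forall c, lo <= c <= hi -> 0 <= w c) ->
  g z <= g a.
Proof.
move=> /andP[lz zh] /andP[la ah] dg w0.
have mvt b e : lo <= b -> b <= e -> e <= hi ->
    exists2 c, b <= c <= e & g e - g b = (c - z) * w c * (e - b).
  move=> lb be eh.
  have inI c : b <= c <= e -> lo <= c <= hi.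
    by case/andP=> bc ce; rewrite (le_trans lb bc) (le_trans ce eh).
  have db c : c \in `]b, e[ -> is_derive c 1 g ((c - z) * w c).
    by rewrite in_itv /= => /andP[/ltW bc /ltW ce]; apply/dg/inI; rewrite bc ce.
  have cg : {within `[b, e], continuous g}.
    apply: derivable_within_continuous => c; rewrite in_itv /= => cI.
    by case: (dg c (inI c cI)).
  have [c] := MVT_segment be db cg.
  by rewrite in_itv /=; exists c.
have [za|az] := leP z a.
- have [c /andP[zc ca] E] := mvt z a lz za ah.
  have : 0 <= (c - z) * w c * (a - z).
    by rewrite !mulr_ge0 // ?subr_ge0 // w0 // (le_trans lz zc) (le_trans ca ah).
  lra.
- have [c /andP[ac cz] E] := mvt a z la (ltW az) zh.
  have : (c - z) * w c * (z - a) <= 0.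
    rewrite mulr_le0_ge0 ?subr_ge0 ?(ltW az) //.
    by rewrite mulr_le0_ge0 ?subr_le0 // w0 // (le_trans la ac) (le_trans cz zh).
  lra.
Qed.

Lemma taylor2_bounds {f psi lo hi z a m M} :
  lo <= z <= hi -> lo <= a <= hi ->
  (forall c, lo <= c <= hi -> is_derive c 1 f ((c - z) * psi c)) ->
  (forall c, lo <= c <= hi -> m <= psi c <= M) ->
  m / 2 * (a - z) ^+ 2 <= f a - f z <= M / 2 * (a - z) ^+ 2.
Proof.
move=> zI aI df psiI.
(* [deriv_factor_min] applied to [f - k (y - z)^2] with [2 k = m] and to its
   opposite with [2 k = M]. *)
pose sq := (@id R - cst z) ^+ 2.
have sqE y : sq y = (y - z) ^+ 2 by rewrite /sq exprfctE.
have dsq (c : R) : is_derive c 1 sq ((c - z) * 2).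
  by apply: is_derive_eq; rewrite /GRing.scale /= expr1 subr0 mulr1 mulrC.
have dg (k c : R) : lo <= c <= hi ->
    is_derive c 1 (f - k *: sq) ((c - z) * (psi c - 2 * k)).
  move=> cI; apply: is_derive_eq; first exact: is_deriveB (df c cI) (is_deriveZ k (dsq c)).
  by rewrite /GRing.scale /=; ring.
have dgN (k c : R) : lo <= c <= hi ->
    is_derive c 1 (- (f - k *: sq)) ((c - z) * (2 * k - psi c)).
  by move=> cI; apply: is_derive_eq; first exact: is_deriveN (dg k c cI); ring.
have [mpsi psiM] : (forall c, lo <= c <= hi -> 0 <= psi c - 2 * (m / 2)) /\
    (forall c, lo <= c <= hi -> 0 <= 2 * (M / 2) - psi c).
  by split=> c /psiI /andP[? ?]; lra.
have := deriv_factor_min zI aI (dg (m / 2)) mpsi.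
have := deriv_factor_min zI aI (dgN (M / 2)) psiM.
rewrite !fctE !sqE subrr expr0n /= !scaler0 /GRing.scale /=.
lra.
Qed.

End Taylor.

Section PowerNearOne.
Context {R : realType}.
Implicit Types (c d q x : R).

Lemma expR_le1D2x x : 0 <= x <= 1 / 2 -> expR x <= 1 + 2 * x.
Proof.
move=> /andP[x0 x12].
have := expR_ge1Dx (- x); rewrite expRN.
move: (expR_gt0 x) => e0; rewrite -[_^-1]mul1r ler_pdivlMr //.
nra.
Qed.

Lemma ln_near1 d c : 0 <= d <= 1 / 2 -> 1 - d <= c <= 1 + d -> `|ln c| <= 2 * d.
Proof.
move=> /andP[d0 d12] /andP[cl cu]; have c0 : 0 < c by lra.
rewrite ler_norml; apply/andP; split.
- rewrite -ler_expR lnK ?posrE // expRN.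
  have := expR_ge1Dx (2 * d); have := expR_gt0 (2 * d).
  move=> e0 e1; rewrite -[_^-1]mul1r ler_pdivrMr //.
  nra.
- have : ln c <= ln (1 + d) by rewrite ler_ln ?posrE //; lra.
  have : ln (1 + d) <= d by apply: le_ln1Dx; lra.
  lra.
Qed.

Lemma powR_near1 {q d c} : 0 <= q -> 0 <= d <= 1 / 2 -> q * d <= 1 / 2 ->
  1 - d <= c <= 1 + d -> ((1 + 2 * q * d) ^+ 2)^-1 <= c `^ q <= (1 + 2 * q * d) ^+ 2.
Proof.
move=> q0 dI qd cI; have c0 : 0 < c by case/andP: dI cI => *; lra.
have qdI : 0 <= q * d <= 1 / 2 by rewrite qd mulr_ge0 //; case/andP: dI.
have eqd : expR (2 * (q * d)) <= (1 + 2 * q * d) ^+ 2.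
  rewrite mulrC -[2]/(2%:R) expRM_natr -mulrA.
  by rewrite lerXn2r ?nnegrE ?expR_ge0 ?expR_le1D2x //; nra.
have lnq : `|q * ln c| <= 2 * (q * d).
  by rewrite normrM ger0_norm // mulrCA ler_wpM2l // ln_near1.
move: lnq; rewrite ler_norml => /andP[lnl lnu].
rewrite /powR gt_eqF //; apply/andP; split.
- apply: le_trans (_ : expR (- (2 * (q * d))) <= _); last by rewrite ler_expR.
  rewrite expRN lef_pV2 ?posrE ?expR_gt0 //.
  rewrite exprn_gt0 //; nra.
- by apply: le_trans eqd; rewrite ler_expR.
Qed.

End PowerNearOne.

Section EcalDensity.
Context {R : realType}.
Implicit Types (p a x : R).

Definition Ecal_density p a := a `^ (p + 1) - 1 - (p + 1) / p * (a `^ p - 1).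

Lemma is_derive_Ecal_density p x : 0 < p -> 0 < x ->
  is_derive x 1 (Ecal_density p) ((x - 1) * ((p + 1) * x `^ (p - 1))).
Proof.
move=> p0 x0.
have -> : Ecal_density p =
    @powR R ^~ (p + 1) - cst 1 - ((p + 1) / p) *: (@powR R ^~ p - cst 1).
  by apply/funext => a; rewrite !fctE.
have := is_derive1_powR (p + 1) x0; have := is_derive1_powR p x0.
move=> dp dp1; apply: is_derive_eq.
rewrite /GRing.scale /= !subr0 addrK -(mulr_powRB1 (ltW x0) p0).
by field; rewrite gt_eqF.
Qed.

Lemma Ecal_density_bounds {p d a} : 1 <= p -> 0 <= d -> 2 * p * d <= 1 ->
  1 - d <= a <= 1 + d ->
  (p + 1) / (2 * (1 + 2 * p * d) ^+ 2) * (a - 1) ^+ 2 <= Ecal_density p a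
    <= (p + 1) / 2 * (1 + 2 * p * d) ^+ 2 * (a - 1) ^+ 2.
Proof.
move=> p1 d0 pd aI; have p0 : 0 < p by lra.
set e := 1 + 2 * p * d.
have e0 : 0 < e ^+ 2 by rewrite exprn_gt0 // /e; nra.
have e1 : (1 + 2 * (p - 1) * d) ^+ 2 <= e ^+ 2.
  by rewrite lerXn2r ?nnegrE /e; nra.
have powI (c : R) : 1 - d <= c <= 1 + d ->
    (p + 1) / e ^+ 2 <= (p + 1) * c `^ (p - 1) <= (p + 1) * e ^+ 2.
  move=> cI; have q0 : 0 <= p - 1 by lra.
  have dI : 0 <= d <= 1 / 2 by apply/andP; split; nra.
  have qd : (p - 1) * d <= 1 / 2 by nra.
  have /andP[lo hi] := powR_near1 q0 dI qd cI.
  have e2 : (e ^+ 2)^-1 <= ((1 + 2 * (p - 1) * d) ^+ 2)^-1.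
    by rewrite lef_pV2 ?posrE // exprn_gt0 //; nra.
  by rewrite !ler_pM2l; lra.
have dE (c : R) : 1 - d <= c <= 1 + d ->
    is_derive c 1 (Ecal_density p) ((c - 1) * ((p + 1) * c `^ (p - 1))).
  by move=> cI; apply: is_derive_Ecal_density => //; case/andP: cI => *; nra.
have z1 : 1 - d <= 1 <= 1 + d by lra.
have := taylor2_bounds z1 aI dE powI.
have -> : Ecal_density p 1 = 0 by rewrite /Ecal_density !powR1; ring.
have -> : (p + 1) / (2 * e ^+ 2) = (p + 1) / e ^+ 2 / 2 by rewrite invfM; ring.
by rewrite subr0 [_ * e ^+ 2 / 2]mulrAC.
Qed.

End EcalDensity.

Section EcalIntegrand.
Context {R : realType}.
Implicit Types (p d V v a : R).

Definition Ecal_integrand p V v :=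
  (v `^ (p + 1) - V `^ (p + 1)) - (p + 1) / p * (v `^ p - V `^ p) * V.

Lemma Ecal_integrand_homog p V a : 0 < V -> 0 <= a ->
  Ecal_integrand p V (a * V) = V `^ (p + 1) * Ecal_density p a.
Proof.
move=> V0 a0.
have VpD : V `^ (p + 1) = V `^ p * V.
  by rewrite powRD ?powRr1 ?(ltW V0) // (gt_eqF V0) implybT.
by rewrite /Ecal_integrand /Ecal_density !powRM ?(ltW V0) // VpD; ring.
Qed.

Lemma sq_weight_homog p V a : 0 < V ->
  (a * V - V) ^+ 2 * V `^ (p - 1) = V `^ (p + 1) * (a - 1) ^+ 2.
Proof.
move=> V0.
have VpD : V `^ (p + 1) = V ^+ 2 * V `^ (p - 1).
  have -> : p + 1 = (p - 1) + 2%:R by ring.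
  by rewrite powRD ?powR_mulrn ?(ltW V0) 1?mulrC // (gt_eqF V0) implybT.
by rewrite VpD; ring.
Qed.

Lemma Ecal_integrand_bounds p d V v : 1 <= p -> 0 <= d -> 2 * p * d <= 1 ->
  0 < V -> `|v - V| <= d * V ->
  (p + 1) / (2 * (1 + 2 * p * d) ^+ 2) * ((v - V) ^+ 2 * V `^ (p - 1))
    <= Ecal_integrand p V v
    <= (p + 1) / 2 * (1 + 2 * p * d) ^+ 2 * ((v - V) ^+ 2 * V `^ (p - 1)).
Proof.
move=> p1 d0 pd V0; rewrite -[v](divfK (lt0r_neq0 V0)); move: (v / V) => a.
rewrite -{2}[V]mul1r -mulrBl normrM (gtr0_norm V0) ler_pM2r // => a1.
have aI : 1 - d <= a <= 1 + d by move: a1; rewrite ler_norml; lra.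
have /andP[lo hi] := Ecal_density_bounds p1 d0 pd aI.
rewrite Ecal_integrand_homog ?sq_weight_homog //; last by nra.
by rewrite !(mulrCA _ (V `^ (p + 1))) !ler_pM2l ?powR_gt0 // lo hi.
Qed.

End EcalIntegrand.

Section Integrals.
Context {d : measure_display} {T : measurableType d} {R : realType}.

Lemma measurable_fun_Ecal_integrand {D : set T} {V v : T -> R} (p : R) :
  measurable_fun D V -> measurable_fun D v ->
  measurable_fun D (fun x => Ecal_integrand p (V x) (v x)).
Proof.
move=> mV mv.
have mpow (f : T -> R) r : measurable_fun D f -> measurable_fun D (fun x => f x `^ r).
  exact: measurableT_comp (measurable_powR r).
have mdiff r : measurable_fun D (fun x => v x `^ r - V x `^ r).
  exact: measurable_funB (mpow _ _ mv) (mpow _ _ mV).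
exact: measurable_funB (mdiff _)
  (measurable_funM (measurable_funM (measurable_cst _) (mdiff _)) mV).
Qed.

Variable mu : {measure set T -> \bar R}.
Context {D : set T}.
Hypothesis mD : measurable D.

Lemma integral_ae_ge0_maxr (g : T -> R) : measurable_fun D g ->
  {ae mu, forall x, D x -> 0 <= g x} ->
  (\int[mu]_(x in D) (g x)%:E = \int[mu]_(x in D) (Num.max (g x) 0)%:E)%E.
Proof.
move=> mg g0; apply: ae_eq_integral => //.
- exact/measurable_EFinP.
- exact/measurable_EFinP/measurable_maxr.
by apply: filterS g0 => x g0x Dx; rewrite max_l // g0x.
Qed.

Lemma ae_integral_sandwich {F g : T -> R} {a b : R} :
  measurable_fun D F -> measurable_fun D g -> (forall x, D x -> 0 <= F x) ->
  0 <= a -> 0 <= b -> {ae mu, forall x, D x -> a * F x <= g x <= b * F x} ->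
  (a%:E * \int[mu]_(x in D) (F x)%:E <= \int[mu]_(x in D) (g x)%:E)%E /\
  (\int[mu]_(x in D) (g x)%:E <= b%:E * \int[mu]_(x in D) (F x)%:E)%E.
Proof.
move=> mF mg F0 a0 b0 aFgbF.
have g0 : {ae mu, forall x, D x -> 0 <= g x}.
  apply: filterS aFgbF => x h Dx; case/andP: (h Dx) => + _.
  by apply: le_trans; rewrite mulr_ge0 ?F0.
have mEF k : measurable_fun D (fun x => (k * F x)%:E).
  exact/measurable_EFinP/measurable_funM.
have kF0 k : 0 <= k -> forall x, D x -> (0 <= (k * F x)%:E)%E.
  by move=> k0 x Dx; rewrite lee_fin mulr_ge0 ?F0.
have EFM k : 0 <= k ->
    (k%:E * \int[mu]_(x in D) (F x)%:E = \int[mu]_(x in D) (k * F x)%:E)%E.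
  by move=> k0; rewrite -ge0_integralZl_EFin //; exact/measurable_EFinP.
have mmax : measurable_fun D (fun x => (Num.max (g x) 0)%:E).
  exact/measurable_EFinP/measurable_maxr.
have max0 x : D x -> (0 <= (Num.max (g x) 0)%:E)%E.
  by rewrite lee_fin le_max lexx orbT.
rewrite (integral_ae_ge0_maxr _ mg g0) !EFM //.
split; apply: ae_ge0_le_integral => //; try exact: kF0.
- apply: filterS aFgbF => x h Dx; case/andP: (h Dx) => aFg _.
  by rewrite lee_fin le_max aFg.
- apply: filterS aFgbF => x h Dx; case/andP: (h Dx) => aFg gbF.
  by rewrite lee_fin ge_max gbF mulr_ge0 ?F0.
Qed.

End Integrals.

Theorem lemma3p2 (R : realType) (p : R) (hp : 1 < p) :
  exists cbar : R, 0 < cbar /\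
  forall (d : measure_display) (T : measurableType d)
    (mu : {measure set T -> \bar R}) (Omega : set T)
    (V : T -> R) (v : R -> T -> R) (delta t0 : R),
    measurable Omega ->
    measurable_fun Omega V ->
    (forall t, t0 <= t -> measurable_fun Omega (v t)) ->
    (forall x, Omega x -> 0 < V x) ->
    0 < delta -> delta < (2 * p)^-1 ->
    (forall t, t0 <= t ->
       {ae mu, forall x, Omega x -> (`|v t x - V x| <= delta * V x)%R}) ->
    forall t, t0 <= t ->
      (((p + 1) / (2 * (1 + cbar * delta) ^+ 2))%:E
         * Enorm mu Omega p V (fun x => (v t x - V x)%R)
       <= Ecal mu Omega p V (v t))%E /\
      (Ecal mu Omega p V (v t)
       <= ((p + 1) / 2 * (1 + cbar * delta) ^+ 2)%:E
            * Enorm mu Omega p V (fun x => (v t x - V x)%R))%E.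
Proof.
have p2 : 0 < 2 * p by rewrite mulr_gt0 //; lra.
exists (2 * p); split => // d T mu Omega V v delta t0 mO mV mv V0 delta0 deltap near t tt0.
have pd : 2 * p * delta <= 1.
  by move: deltap; rewrite -[(2 * p)^-1]mulr1 ltr_pdivlMl // => /ltW.
have p1 : 0 < p + 1 by lra.
have e0 : 0 < 1 + 2 * p * delta by nra.
pose F x := (v t x - V x) ^+ 2 * V x `^ (p - 1).
have mF : measurable_fun Omega F.
  exact: measurable_funM (measurable_funX 2 (measurable_funB (mv t tt0) mV))
    (measurableT_comp (measurable_powR _) mV).
have F0 x : Omega x -> 0 <= F x by rewrite /F mulr_ge0 ?sqr_ge0 ?powR_ge0.
rewrite /Enorm /Ecal.
apply: (ae_integral_sandwich mu mO mF (measurable_fun_Ecal_integrand p mV (mv t tt0)) F0).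
- by rewrite divr_ge0 ?mulr_ge0 ?exprn_ge0 ?ltW.
- by rewrite mulr_ge0 ?divr_ge0 ?exprn_ge0 ?ltW.
apply: filterS (near t tt0) => x h Ox.
exact: Ecal_integrand_bounds (ltW hp) (ltW delta0) pd (V0 x Ox) (h Ox).
Qed.
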